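(* Let $M$ agents have finite-horizon MDPs $\mathcal{M}^i=(\mathcal{S},\mathcal{A},H,\{P^i_h\},\{r^i_h\})$ with common finite state and action spaces, satisfying: there exist kernels $P^c_h$, $P^{\mathrm{ind},i}_h$ and $\varepsilon_{\mathsf p}\in[0,1)$ such that $P^i_h(s'|s,a)=(1-\varepsilon_{\mathsf p})P^c_h(s'|s,a)+\varepsilon_{\mathsf p}P^{\mathrm{ind},i}_h(s'|s,a)$ for all $i,h,s,a,s'$. Then for any policy $\pi$, any initial state $s_0$, any $(s,a,h)\in\mathcal{S}\times\mathcal{A}\times[H]$ and any $i,j\in[M]$, $$|d^{i,\pi}_{s_0,h}(s,a)-d^{j,\pi}_{s_0,h}(s,a)|\le\varepsilon_{\mathsf p}H.$$
   Context: $d^{i,\pi}_{s_0,h}(s,a)$ denotes the probability that $(s_h,a_h)=(s,a)$ when following $\pi$ in $\mathcal{M}^i$ starting from $s_1=s_0$. *)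

From HB Require Import structures.
From mathcomp Require Import all_boot all_order all_algebra.
Set Implicit Arguments. Unset Strict Implicit. Unset Printing Implicit Defensive.
Import Order.TTheory GRing.Theory Num.Theory.
Local Open Scope ring_scope.

Section MDP.
Variables (R : realFieldType) (S A : finType).

Definition is_kernel (K : S -> A -> S -> R) : Prop :=
  (forall s a s', 0 <= K s a s') /\ (forall s a, \sum_(s' : S) K s a s' = 1).

Definition is_policy (pi : nat -> S -> A -> R) : Prop :=
  forall h s, (forall a, 0 <= pi h s a) /\ \sum_(a : A) pi h s a = 1.

(* sdist P pi s0 n s = probability that s_{n+1} = s when following pi in
   the MDP with (step-indexed) kernels P, starting from s_1 = s0. *)
Fixpoint sdist (P : nat -> S -> A -> S -> R) (pi : nat -> S -> A -> R)
  (s0 : S) (n : nat) : S -> R :=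
  match n with
  | 0 => fun s => if s == s0 then 1 else 0
  | n'.+1 => fun s' =>
      \sum_(s : S) \sum_(a : A)
        sdist P pi s0 n' s * pi n'.+1 s a * P n'.+1 s a s'
  end.

(* occupancy d^{pi}_{s0,h}(s,a) = Pr[(s_h, a_h) = (s, a)], steps h = 1..H. *)
Definition occupancy (P : nat -> S -> A -> S -> R) (pi : nat -> S -> A -> R)
  (s0 : S) (h : nat) (s : S) (a : A) : R :=
  sdist P pi s0 h.-1 s * pi h s a.

End MDP.

(* Writing K1 d1 - K2 d2 = d1 (K1 - K2) + (d1 - d2) K2 shows that one step adds
   to the l1 distance between the distributions at most the l1 distance between
   the kernels, which is at most 2 eps since both kernels contain (1 - eps) Pc.
   After h - 1 steps the l1 distance is thus at most 2 eps (h - 1).  A difference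
   of two probability vectors sums to zero, so each of its coordinates is at most
   half its l1 norm, and multiplying by pi_h(a | s) <= 1 bounds the occupancies. *)
From HB Require Import structures.
From mathcomp Require Import all_boot all_order all_algebra.
From mathcomp Require Import ring.
Set Implicit Arguments. Unset Strict Implicit. Unset Printing Implicit Defensive.
Import Order.TTheory GRing.Theory Num.Theory.
Local Open Scope ring_scope.

Section Policy.
Variables (R : realFieldType) (S A : finType) (pi : nat -> S -> A -> R).
Hypothesis pi_policy : is_policy pi.

Lemma policy_ge0 h s a : 0 <= pi h s a.
Proof. exact: (pi_policy h s).1. Qed.

Lemma sum_policy h s : \sum_a pi h s a = 1.
Proof. exact: (pi_policy h s).2. Qed.

Lemma policy_le1 h s a : pi h s a <= 1.
Proof.
rewrite -(sum_policy h s) (bigD1 a) //= lerDl.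
by apply: sumr_ge0 => b _; exact: policy_ge0.
Qed.

End Policy.

Section Transition.
Variables (R : realFieldType) (S A : finType).

Definition push (p : S -> A -> R) (K : S -> A -> S -> R) (d : S -> R) (s' : S) :=
  \sum_(s : S) \sum_(a : A) d s * p s a * K s a s'.

Lemma sdistS (P : nat -> S -> A -> S -> R) pi s0 n :
  sdist P pi s0 n.+1 = push (pi n.+1) (P n.+1) (sdist P pi s0 n).
Proof. by []. Qed.

Variable p : S -> A -> R.
Hypothesis p_ge0 : forall s a, 0 <= p s a.
Hypothesis sum_p : forall s, \sum_a p s a = 1.

Lemma push_ge0 K d :
  (forall s a s', 0 <= K s a s') -> (forall s, 0 <= d s) ->
  forall s', 0 <= push p K d s'.
Proof.
move=> K_ge0 d_ge0 s'; apply: sumr_ge0 => s _; apply: sumr_ge0 => a _.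
by rewrite !mulr_ge0.
Qed.

Lemma sum_push K d :
  (forall s a, \sum_s' K s a s' = 1) -> \sum_s' push p K d s' = \sum_s d s.
Proof.
move=> sum_K; rewrite exchange_big; apply: eq_bigr => s _.
rewrite exchange_big /= -[RHS]mulr1 -(sum_p s) mulr_sumr.
by apply: eq_bigr => a _; rewrite -mulr_sumr sum_K mulr1.
Qed.

Lemma push_l1_dist K1 K2 d1 d2 (delta : R) :
  is_kernel K2 -> (forall s, 0 <= d1 s) -> \sum_s d1 s = 1 ->
  (forall s a, \sum_s' `|K1 s a s' - K2 s a s'| <= delta) ->
  \sum_s' `|push p K1 d1 s' - push p K2 d2 s'|
    <= delta + \sum_s `|d1 s - d2 s|.
Proof.
move=> [K2_ge0 sum_K2] d1_ge0 sum_d1 dK.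
pose bound s' := \sum_s \sum_a
  (d1 s * p s a * `|K1 s a s' - K2 s a s'| + `|d1 s - d2 s| * p s a * K2 s a s').
have push_diff s' : push p K1 d1 s' - push p K2 d2 s' = \sum_s \sum_a
    (d1 s * p s a * (K1 s a s' - K2 s a s') + (d1 s - d2 s) * p s a * K2 s a s').
  rewrite -sumrB; apply: eq_bigr => s _; rewrite -sumrB.
  by apply: eq_bigr => a _; ring.
apply: (@le_trans _ _ (\sum_s' bound s')).
  apply: ler_sum => s' _; rewrite push_diff /bound.
  apply: le_trans (ler_norm_sum _ _ _) _; apply: ler_sum => s _.
  apply: le_trans (ler_norm_sum _ _ _) _; apply: ler_sum => a _.
  apply: le_trans (ler_normD _ _) _.
  rewrite !normrM (ger0_norm (d1_ge0 s)) !(ger0_norm (p_ge0 s a)).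
  by rewrite (ger0_norm (K2_ge0 s a s')).
rewrite exchange_big -[delta]mul1r -sum_d1 mulr_suml -big_split /=.
apply: ler_sum => s _; rewrite exchange_big /=.
rewrite -[X in _ <= X]mul1r -(sum_p s) mulr_suml; apply: ler_sum => a _.
rewrite big_split /= -!mulr_sumr sum_K2 mulr1 mulrDr.
apply: lerD; last by rewrite mulrC.
rewrite mulrA [p s a * _]mulrC; apply: ler_wpM2l (dK s a).
by rewrite mulr_ge0.
Qed.

End Transition.

Lemma normr_le_sum_of_sum_eq0 (R : numDomainType) (S : finType) (x : S -> R) s :
  \sum_t x t = 0 -> `|x s| *+ 2 <= \sum_t `|x t|.
Proof.
rewrite (bigD1 s) //= => /eqP; rewrite addr_eq0 => /eqP x_s.
by rewrite (bigD1 s) //= mulr2n lerD2l x_s normrN ler_norm_sum.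
Qed.

Section StateDistribution.
Variables (R : realFieldType) (S A : finType) (H : nat).
Variables (pi : nat -> S -> A -> R) (s0 : S).
Hypothesis pi_policy : is_policy pi.

Section OneMDP.
Variable P : nat -> S -> A -> S -> R.
Hypothesis P_kernel : forall h, (1 <= h <= H)%N -> is_kernel (P h).

Lemma sdist_ge0 n : (n <= H)%N -> forall s, 0 <= sdist P pi s0 n s.
Proof.
elim: n => [|n IH] leqnH s /=; first by case: eqP.
apply: push_ge0 => [t b||t]; first exact: policy_ge0.
  by case: (@P_kernel n.+1 leqnH).
exact: IH (ltnW leqnH) t.
Qed.

Lemma sum_sdist n : (n <= H)%N -> \sum_s sdist P pi s0 n s = 1.
Proof.
elim: n => [|n IH] leqnH /=.
  by rewrite (bigD1 s0) //= eqxx big1 ?addr0 // => t /negbTE ->.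
rewrite sum_push; first exact: IH (ltnW leqnH).
  exact: sum_policy.
by case: (@P_kernel n.+1 leqnH).
Qed.

End OneMDP.

Lemma sdist_l1_dist (P1 P2 : nat -> S -> A -> S -> R) (delta : R) :
  (forall h, (1 <= h <= H)%N -> is_kernel (P1 h)) ->
  (forall h, (1 <= h <= H)%N -> is_kernel (P2 h)) ->
  (forall h s a, (1 <= h <= H)%N ->
     \sum_s' `|P1 h s a s' - P2 h s a s'| <= delta) ->
  forall n, (n <= H)%N ->
  \sum_s `|sdist P1 pi s0 n s - sdist P2 pi s0 n s| <= delta * n%:R.
Proof.
move=> P1_kernel P2_kernel dP; elim=> [|n IH] leqnH.
  by rewrite /= big1 ?mulr0 // => t _; rewrite subrr normr0.
have leqnH' := ltnW leqnH.
have step := push_l1_dist (policy_ge0 pi_policy n.+1) (sum_policy pi_policy n.+1)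
  (sdist P2 pi s0 n) (P2_kernel n.+1 leqnH)
  (sdist_ge0 P1_kernel leqnH') (sum_sdist P1_kernel leqnH')
  (fun s a => dP n.+1 s a leqnH).
rewrite !sdistS; apply: le_trans step _.
rewrite -natr1 mulrDr mulr1 addrC lerD2r.
exact: IH.
Qed.

Lemma occupancy_dist (P1 P2 : nat -> S -> A -> S -> R) (delta : R) :
  (forall h, (1 <= h <= H)%N -> is_kernel (P1 h)) ->
  (forall h, (1 <= h <= H)%N -> is_kernel (P2 h)) ->
  (forall h s a, (1 <= h <= H)%N ->
     \sum_s' `|P1 h s a s' - P2 h s a s'| <= delta) ->
  forall h s a, (1 <= h <= H)%N ->
  `|occupancy P1 pi s0 h s a - occupancy P2 pi s0 h s a| *+ 2
    <= delta * h.-1%:R.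
Proof.
move=> P1_kernel P2_kernel dP h s a /andP[_ lehH].
have lehH' : (h.-1 <= H)%N := leq_trans (leq_pred h) lehH.
have sum_diff0 : \sum_t (sdist P1 pi s0 h.-1 t - sdist P2 pi s0 h.-1 t) = 0.
  by rewrite sumrB (sum_sdist P1_kernel lehH') (sum_sdist P2_kernel lehH') subrr.
apply: le_trans (sdist_l1_dist P1_kernel P2_kernel dP lehH').
apply: le_trans (normr_le_sum_of_sum_eq0 s sum_diff0).
rewrite /occupancy -mulrBl normrM (ger0_norm (policy_ge0 pi_policy h s a)).
by rewrite ler_pMn2r // ler_piMr // policy_le1.
Qed.

End StateDistribution.

Lemma mixture_l1_dist (R : numDomainType) (S : finType) (eps : R)
    (c k1 k2 : S -> R) :
  0 <= eps -> (forall s, 0 <= k1 s) -> (forall s, 0 <= k2 s) ->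
  \sum_s k1 s = 1 -> \sum_s k2 s = 1 ->
  \sum_s `|((1 - eps) * c s + eps * k1 s) - ((1 - eps) * c s + eps * k2 s)|
    <= eps *+ 2.
Proof.
move=> eps_ge0 k1_ge0 k2_ge0 sum_k1 sum_k2.
under eq_bigr do rewrite opprD addrACA subrr add0r -mulrBr normrM ger0_norm //.
rewrite -mulr_sumr -mulr_natr ler_wpM2l //.
apply: le_trans (_ : \sum_s (k1 s + k2 s) <= _).
  by apply: ler_sum => s _; apply: le_trans (ler_normB _ _) _; rewrite !ger0_norm.
by rewrite big_split /= sum_k1 sum_k2.
Qed.


Theorem lemma11 (R : realFieldType) (S A : finType) (M H : nat)
  (P : 'I_M -> nat -> S -> A -> S -> R)
  (Pc : nat -> S -> A -> S -> R)
  (Pind : 'I_M -> nat -> S -> A -> S -> R)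
  (eps : R) :
  (forall i h, (1 <= h <= H)%N -> is_kernel (P i h)) ->
  (forall h, (1 <= h <= H)%N -> is_kernel (Pc h)) ->
  (forall i h, (1 <= h <= H)%N -> is_kernel (Pind i h)) ->
  0 <= eps -> eps < 1 ->
  (forall i h s a s', (1 <= h <= H)%N ->
     P i h s a s' = (1 - eps) * Pc h s a s' + eps * Pind i h s a s') ->
  forall (pi : nat -> S -> A -> R), is_policy pi ->
  forall (s0 s : S) (a : A) (h : nat), (1 <= h <= H)%N ->
  forall i j : 'I_M,
    `|occupancy (P i) pi s0 h s a - occupancy (P j) pi s0 h s a| <= eps * H%:R.
Proof.
move=> P_kernel _ Pind_kernel eps_ge0 _ P_mix pi pi_policy s0 s a h hh i j.
have dP h' s1 a1 : (1 <= h' <= H)%N ->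
    \sum_s' `|P i h' s1 a1 s' - P j h' s1 a1 s'| <= eps *+ 2.
  move=> hh'; under eq_bigr do rewrite !P_mix //.
  have [[ki_ge0 sum_ki] [kj_ge0 sum_kj]] := (Pind_kernel i h' hh', Pind_kernel j h' hh').
  exact: mixture_l1_dist.
have := occupancy_dist s0 pi_policy (P_kernel i) (P_kernel j) dP s a hh.
rewrite mulrnAl ler_pMn2r // => /le_trans; apply.
rewrite ler_wpM2l // ler_nat.
by case/andP: hh => _; exact: leq_trans (leq_pred h).
Qed.
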